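(* In any iteration of Algorithm 1, if there exist an integer $m\ge0$ and an index $j\in\{1,\dots,n\}$ such that $i^*=b^m(j)$, then $i_L<j$ (where $i^*,i_L$ are the quantities of that iteration).
   Context: Problem (P): given an integer $n\ge1$, reals $0<q_1\le\cdots\le q_n$, $z_1,\dots,z_n>0$ and $K>0$, maximize $\sum_{i=1}^n x_i$ subject to $0\le x_i\le q_i$, $0\le x_1\le\cdots\le x_n$, $\sum_{i=1}^n z_ix_i\le K$. For $1\le i<j\le n+1$ let $\mathrm{sum}(i,j)=z_i+\cdots+z_{j-1}$ and $\mathrm{avg}(i,j)=\mathrm{sum}(i,j)/(j-i)$. Algorithm 1 (run on an instance of (P)): Initialize $S=\{0,n+1\}$, $y_i=\mathrm{avg}(i,n+1)$ and $x_i=0$ for $i=1,\dots,n$, and $\hat B=K$. While $\hat B>0$ and $S\ne\{0,1,\dots,n+1\}$, perform an iteration: let $i^*$ be the index $i\in\{1,\dots,n\}\setminus S$ minimizing $y_i$, ties broken in favour of the smallest index; let $i_L=\max\{j\in S:j<i^*\}$ and $i_R=\min\{j\in S:j>i^*\}$; set $d=\min\{\hat B/((i_R-i^* )y_{i^*}),\ q_{i^*}-x_{i^*}\}$; set $\hat B\leftarrow\hat B-d(i_R-i^* )y_{i^*}$; set $x_i\leftarrow x_i+d$ for all $i^*\le i<i_R$; set $y_i\leftarrow\mathrm{avg}(i,i^* )$ for all $i_L<i<i^*$; add $i^*$ to $S$. Finally output $x_1,\dots,x_n$. Blocker: for $1\le i\le n$, $b(i)$ is the value of $i^*$ in the last iteration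 in which $y_i$ is updated (i.e. the last iteration with $i_L<i<i^*$); if $y_i$ is never updated, $b(i)=n+1$. Iterates: $b^0$ is the identity and $b^m(i)=b(b^{m-1}(i))$ (defined as long as $b^{m-1}(i)\le n$). *)

From mathcomp Require Import all_boot all_order all_algebra.
Set Implicit Arguments. Unset Strict Implicit. Unset Printing Implicit Defensive.
Import Order.TTheory GRing.Theory Num.Theory.
Local Open Scope ring_scope.

(* Indices are natural numbers; q, z are only meaningful on 1..n. *)

Definition zsum (R : realFieldType) (z : nat -> R) (i j : nat) : R :=
  \sum_(i <= k < j) z k.

Definition avg (R : realFieldType) (z : nat -> R) (i j : nat) : R :=
  zsum z i j / (j - i)%:R.

(* State of Algorithm 1: the set S (as a boolean predicate on nat),
   the vectors y and x, and the remaining budget B-hat. *)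
Record state (R : realFieldType) := State {
  stS : nat -> bool;
  sty : nat -> R;
  stx : nat -> R;
  stB : R }.

Definition init (R : realFieldType) (n : nat) (z : nat -> R) (K : R) : state R :=
  State (fun k => (k == 0)%N || (k == n.+1)) (fun i => avg z i n.+1)
        (fun _ => 0) K.

(* Loop condition: B-hat > 0 and S <> {0,1,...,n+1}
   (S is always a subset of {0,...,n+1}). *)
Definition loop_cond (R : realFieldType) (n : nat) (st : state R) : bool :=
  (0 < stB st) && ~~ all (stS st) (iota 0 n.+2).

(* Index i in {1..n} \ S minimizing y_i, ties broken toward the smallest index. *)
Definition pick_star (R : realFieldType) (n : nat) (st : state R) : option nat :=
  foldl (fun best i =>
           if stS st i then best else
           match best with
           | None => Some i
           | Some b => if sty st i < sty st b then Some i else best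
           end) None (iota 1 n).

Definition i_star (R : realFieldType) (n : nat) (st : state R) : nat :=
  odflt 0%N (pick_star n st).

Definition i_L (R : realFieldType) (n : nat) (st : state R) : nat :=
  last 0%N [seq j <- iota 0 (i_star n st) | stS st j].

Definition i_R (R : realFieldType) (n : nat) (st : state R) : nat :=
  head n.+1 [seq j <- iota (i_star n st).+1 (n - i_star n st).+1 | stS st j].

Definition step (R : realFieldType) (n : nat) (q : nat -> R) (z : nat -> R)
    (st : state R) : state R :=
  if loop_cond n st then
    let i := i_star n st in
    let iL := i_L n st in
    let iR := i_R n st in
    let c := (iR - i)%:R * sty st i in
    let d := Num.min (stB st / c) (q i - stx st i) in
    State (fun k => stS st k || (k == i))
          (fun k => if (iL < k < i)%N then avg z k i else sty st k)
          (fun k => if (i <= k < iR)%N then stx st k + d else stx st k)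
          (stB st - d * c)
  else st.

Definition state_at (R : realFieldType) (n : nat) (q z : nat -> R) (K : R)
    (k : nat) : state R :=
  iter k (step n q z) (init n z K).

Definition performed (R : realFieldType) (n : nat) (q z : nat -> R) (K : R)
    (k : nat) : bool :=
  loop_cond n (state_at n q z K k).

(* Blocker b(i): i* of the last iteration with i_L < i < i*; n+1 if none.
   At most n iterations are performed (each adds a new index of 1..n to S),
   so scanning iterations 0..n covers all of them. *)
Definition blocker (R : realFieldType) (n : nat) (q z : nat -> R) (K : R)
    (i : nat) : nat :=
  let ks := [seq k <- iota 0 n.+1 |
              performed n q z K k &&
              (i_L n (state_at n q z K k) < i < i_star n (state_at n q z K k))%N] in
  if ks is [::] then n.+1 else i_star n (state_at n q z K (last 0%N ks)).

From mathcomp Require Import all_boot all_order all_algebra.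
Import Order.TTheory GRing.Theory Num.Theory.
Local Open Scope ring_scope.

(* The blocker b(x) is the i* of the iteration whose gap, the open interval
   between i_L and i*, contained x when it was split. If i*(k2) lies strictly
   above i_L(k) and at most at i*(k), then iteration k2 does not precede
   iteration k, since otherwise i*(k2) would already be in S at iteration k;
   hence i_L(k) is in S at iteration k2 and lies below i*(k2), so
   i_L(k) <= i_L(k2). As the iteration producing b^(m+1)(j) has b^m(j) in its
   gap, induction on m shows that i_L(k) < b^m(j) <= i*(k) forces i_L(k) < j. *)

Lemma leq_last_filter_iota (p : pred nat) (i x : nat) :
  p x -> (x < i)%N -> (x <= last 0 [seq j <- iota 0 i | p j])%N.
Proof.
elim: i => [//|i IH] px; rewrite ltnS leq_eqVlt -[i.+1]addn1 iotaD filter_cat add0n /=.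
case/orP => [/eqP xi | lt_xi]; first by rewrite -xi px last_cat.
by case: (p i); rewrite last_cat /= ?cats0 ?IH // ltnW.
Qed.

Lemma last_filter_iotaP (p : pred nat) (i : nat) :
  p 0 -> (0 < i)%N ->
  p (last 0 [seq j <- iota 0 i | p j]) && (last 0 [seq j <- iota 0 i | p j] < i)%N.
Proof.
move=> p0 i_gt0; have := mem_last 0 [seq j <- iota 0 i | p j].
by rewrite inE mem_filter mem_iota => /predU1P [->|]; rewrite ?p0.
Qed.

Definition pick_step {R : realFieldType} (st : state R) (best : option nat) (i : nat) :=
  if stS st i then best else
  match best with
  | None => Some i
  | Some b => if sty st i < sty st b then Some i else best
  end.

Lemma foldl_pick_stepP {R : realFieldType} (st : state R) (s : seq nat) acc :
  match foldl (pick_step st) acc s with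
  | Some i => (acc == Some i) || (i \in s) && ~~ stS st i
  | None => (acc == None) && all (stS st) s
  end.
Proof.
elim: s acc => [|a s IH] acc /=; first by case: acc => [i|] //=; rewrite eqxx.
move: (IH (pick_step st acc a)); rewrite /pick_step.
case: (foldl _ _ s) => [i|]; case Sa: (stS st a) => //=.
- by rewrite inE => /orP [->|/andP [-> ->]]; rewrite ?orbT.
- case: acc => [c|] /=; first case: ifP => _;
    by case/orP => [/eqP [<-]|/andP [si ->]]; rewrite ?inE ?eqxx ?Sa ?si ?orbT.
- by case: acc => [c|] //=; case: ifP.
Qed.

Section Iterations.
Context {R : realFieldType} {n : nat} {q z : nat -> R} {K : R}.
Local Notation st := (state_at n q z K).
Local Notation performed := (performed n q z K).
Local Notation b := (blocker n q z K).

Lemma stS_state_atS k x :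
  stS (st k.+1) x = stS (st k) x || performed k && (x == i_star n (st k)).
Proof. by rewrite /performed /state_at iterS /step; case: loop_cond; rewrite ?orbF. Qed.

Lemma stS_state_at_mono {k1 k2 x : nat} :
  (k1 <= k2)%N -> stS (st k1) x -> stS (st k2) x.
Proof.
elim: k2 => [|k2 IH]; first by rewrite leqn0 => /eqP ->.
rewrite leq_eqVlt ltnS => /orP [/eqP -> //|le12] Sx.
by rewrite stS_state_atS IH.
Qed.

Lemma istar_in_stS_next {k : nat} : performed k -> stS (st k.+1) (i_star n (st k)).
Proof. by move=> pk; rewrite stS_state_atS pk eqxx orbT. Qed.

Lemma stS_state_at_ends k : stS (st k) 0 && stS (st k) n.+1.
Proof. by apply/andP; split; apply: (@stS_state_at_mono 0) => //=; rewrite eqxx ?orbT. Qed.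

Lemma istar_performed {k : nat} :
  performed k ->
  [/\ (0 < i_star n (st k))%N, (i_star n (st k) <= n)%N & ~~ stS (st k) (i_star n (st k))].
Proof.
rewrite /performed /loop_cond => /andP [_ not_full].
have := foldl_pick_stepP (st k) (iota 1 n) None.
rewrite /i_star /pick_star -/(pick_step (st k)).
case: foldl => [i /= /andP [] | /= S_mid]; first by rewrite mem_iota add1n ltnS => /andP [-> ->] ->.
case/negP: not_full; have /andP [S0 Sn1] := stS_state_at_ends k.
apply/allP => x; rewrite mem_iota add0n ltnS.
case: x => [//|x] /andP [_]; rewrite leq_eqVlt => /orP [/eqP [->] //|x_le_n].
by apply: (allP S_mid); rewrite mem_iota.
Qed.

Lemma iL_performed {k : nat} :
  performed k ->
  [/\ stS (st k) (i_L n (st k)), (i_L n (st k) < i_star n (st k))%N &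
      forall x, stS (st k) x -> (x < i_star n (st k))%N -> (x <= i_L n (st k))%N].
Proof.
case/istar_performed => istar_gt0 _ _; have /andP [S0 _] := stS_state_at_ends k.
have /andP [SiL iL_lt] := last_filter_iotaP _ _ S0 istar_gt0.
by split=> // x; apply: leq_last_filter_iota.
Qed.

Lemma blockerP {i : nat} :
  (b i <= n)%N ->
  exists2 k, performed k &
    (i_L n (st k) < i < i_star n (st k))%N /\ b i = i_star n (st k).
Proof.
rewrite /blocker; set ks := filter _ _; case ks_def: ks => [|k0 ks']; first by rewrite ltnn.
have := mem_last k0 ks'; rewrite -ks_def mem_filter => /andP [/andP [pk inner] _] _.
by exists (last k0 ks'); rewrite ?ks_def.
Qed.

Lemma leq_iL_nested {k k2 : nat} :
  performed k -> performed k2 ->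
  (i_L n (st k) < i_star n (st k2) <= i_star n (st k))%N ->
  (i_L n (st k) <= i_L n (st k2))%N.
Proof.
move=> pk pk2 /andP [iL_lt le_istar].
have [_ _ notS] := istar_performed pk.
have [SiL _ max_iL] := iL_performed pk.
have le_k : (k <= k2)%N.
  rewrite leqNgt; apply/negP => lt_k2.
  have S2 := stS_state_at_mono lt_k2 (istar_in_stS_next pk2).
  have lt_istar : (i_star n (st k2) < i_star n (st k))%N.
    by rewrite ltn_neqAle le_istar andbT; apply: contraNneq notS => <-.
  by rewrite ltnNge max_iL in iL_lt.
have [_ _ max_iL2] := iL_performed pk2.
by rewrite max_iL2 // (stS_state_at_mono le_k).
Qed.

Lemma iL_lt_iter_blocker {k : nat} (m j : nat) :
  performed k -> (i_L n (st k) < iter m b j <= i_star n (st k))%N ->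
  (i_L n (st k) < j)%N.
Proof.
elim: m => [|m IH] pk /andP [iL_lt le_istar]; first exact: iL_lt.
have bx_le : (b (iter m b j) <= n)%N.
  by apply: leq_trans le_istar _; case: (istar_performed pk).
have [k' pk' [/andP [iL'_lt x_lt] bxE]] := blockerP bx_le.
have le_iL : (i_L n (st k) <= i_L n (st k'))%N.
  by apply: leq_iL_nested pk pk' _; rewrite -bxE -iterS iL_lt.
apply: IH pk _; rewrite (leq_ltn_trans le_iL iL'_lt) /=.
by apply/ltnW/(leq_trans x_lt); rewrite -bxE -iterS.
Qed.

End Iterations.

Theorem lemma10 (R : realFieldType) (n : nat) (q z : nat -> R) (K : R)
    (hn : (1 <= n)%N)
    (hq_pos : forall i, (1 <= i <= n)%N -> 0 < q i)
    (hq_mono : forall i j, (1 <= i)%N -> (i <= j)%N -> (j <= n)%N -> q i <= q j)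
    (hz_pos : forall i, (1 <= i <= n)%N -> 0 < z i)
    (hK : 0 < K)
    (k m j : nat) :
  performed n q z K k ->
  (1 <= j <= n)%N ->
  (forall m', (m' < m)%N -> (iter m' (blocker n q z K) j <= n)%N) ->
  i_star n (state_at n q z K k) = iter m (blocker n q z K) j ->
  (i_L n (state_at n q z K k) < j)%N.
Proof.
move=> pk _ _ istarE; apply: (iL_lt_iter_blocker m j pk).
by have [_ iL_lt _] := iL_performed pk; rewrite -istarE iL_lt leqnn.
Qed.
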